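(* Let $m/n\in(0,1/2)$, $\mathrm{LFS}(m/n)=(0=u_1/v_1,\dots,u_\alpha/v_\alpha)$, and let the elements of $\mathcal A_{m/n}$ be $0=k_1<k_2<\cdots<k_\alpha=m-1$. Then $\#\mathcal O_{m/n}[k_i,0]=v_i$ for each $i$. In particular, the elements of $\mathcal A_{m/n}$ appear in decreasing order along the orbit segment $\mathcal O_{m/n}[m,0]$.
   Context: Rationals in lowest terms. $\mathrm{LFP}(h/k)$ is the element immediately preceding $h/k$ in the increasing list of rationals in $[0,1/2]$ with denominator at most $k$; $\mathrm{LFS}(m/n)=(0=u_1/v_1,\dots,u_\alpha/v_\alpha)$ with $u_\alpha/v_\alpha=\mathrm{LFP}(m/n)$ and $u_i/v_i=\mathrm{LFP}(u_{i+1}/v_{i+1})$. $+_n$ is addition mod $n$; $\mathcal O_{m/n}[r,s]=\{r+_njm\colon0\le j\le K\}$ with $K\ge0$ least such that $r+_nKm=s$ (an orbit segment ordered by $j$). $k\in[0,m-1]$ is $m/n$-admissible if $\{k+1,\dots,m-1\}\cap\mathcal O_{m/n}[k,0]=\emptyset$; $\mathcal A_{m/n}$ is the set of such $k$ (it has exactly $\alpha$ elements, including $0$ and $m-1$). *)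

From mathcomp Require Import all_boot all_order all_algebra.
Set Implicit Arguments. Unset Strict Implicit. Unset Printing Implicit Defensive.
Import Order.TTheory GRing.Theory Num.Theory.

Definition farey_half (k : nat) : seq rat :=
  [seq q <- [seq (i%:R / d%:R : rat) | d <- iota 1 k, i <- iota 0 d.+1]
     | (0 <= q) && (q <= 1/2)]%R.

(* LFP(x): the element immediately preceding x in the increasing list of
   rationals in [0,1/2] with denominator at most denq x, i.e. the largest such
   rational strictly below x. *)
Definition LFP (x : rat) : rat :=
  foldr Num.max 0%R [seq q <- farey_half `|denq x|%N | (q < x)%R].

(* LFS(x) = (0 = u_1/v_1, ..., u_alpha/v_alpha) with u_alpha/v_alpha = LFP x
   and u_i/v_i = LFP(u_{i+1}/v_{i+1}).  Recursion: LFS(0) = [::],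
   LFS(x) = LFS(LFP x) ++ [:: LFP x] for x <> 0 (fuel is only for termination;
   the denominator strictly decreases at each step). *)
Fixpoint LFS_aux (fuel : nat) (x : rat) : seq rat :=
  match fuel with
  | 0 => [::]
  | f.+1 => if x == 0%R then [::] else rcons (LFS_aux f (LFP x)) (LFP x)
  end.

Definition LFS (x : rat) : seq rat := LFS_aux (`|denq x|%N ^ 2).+1 x.

(* K >= 0 least with r +_n K m = s (all arithmetic mod n); if gcd(m,n)=1 such K < n. *)
Definition orbK (m n r s : nat) : nat :=
  find (fun j => (r + j * m) %% n == s %% n) (iota 0 n).

Definition orbit_seg (m n r s : nat) : seq nat :=
  [seq (r + j * m) %% n | j <- iota 0 (orbK m n r s).+1].

Definition admissible (m n k : nat) : bool :=
  (k < m) && ~~ has (fun x => (k < x) && (x < m)) (orbit_seg m n k 0).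

Definition adm_list (m n : nat) : seq nat := [seq k <- iota 0 m | admissible m n k].

From Pilot Require Import Defs.
From mathcomp Require Import all_boot all_order all_algebra.
From mathcomp Require Import zify.
Import Order.TTheory GRing.Theory Num.Theory.
Set Implicit Arguments. Unset Strict Implicit.

(* Write w(v) = v m mod n.  A point k < m reaches 0 after exactly v - 1 steps
   of the orbit when k + w(v) = m, and the orbit points strictly between k and
   m are the m - w(v') with v' < v and w(v') < w(v).  Hence k is admissible
   iff v is a record minimum of w, and A_{m/n} = {m - w(v) : v a record}.
   If u/v = LFP(p/q) then p v - q u = 1, and the identity
   v (y p mod q) = q (y u mod v) + y  (y < v)
   shows that the records of p/q below v are those of u/v, while v itself,
   with w(v) = 1, is the last record; by induction the records of m/n are the
   denominators of LFS(m/n).  Finally m - w(v) sits at position n - v of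
   O_{m/n}[m,0], so admissible points with larger orbits come earlier. *)

(** * Arithmetic modulo n *)

Lemma addn_mulnl_mod_inj m n r j j' : coprime m n -> j < n -> j' < n ->
  (r + j * m) %% n = (r + j' * m) %% n -> j = j'.
Proof.
move=> co_mn; wlog le_jj' : j j' / j <= j'.
  by move=> W lt_jn lt_j'n E; case: (leqP j j') => [|/ltnW] le; [|apply/esym]; apply: W.
move=> _ lt_j'n /eqP; rewrite eqn_modDl eq_sym eqn_mod_dvd ?leq_mul2r ?le_jj' ?orbT //.
rewrite -mulnBl Gauss_dvdl 1?coprime_sym // => dvd_n.
have [diff0 | diff_gt0] := posnP (j' - j); first by lia.
by have := dvdn_leq diff_gt0 dvd_n; lia.
Qed.

Lemma mulnl_mod_inj m n j j' : coprime m n -> j < n -> j' < n ->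
  j * m %% n = j' * m %% n -> j = j'.
Proof. by move=> co_mn lt_jn lt_j'n E; apply: (@addn_mulnl_mod_inj m n 0); rewrite ?add0n. Qed.

Lemma mulnl_mod_eq0 m n x : coprime m n -> 0 < x < n -> (x * m %% n == 0) = false.
Proof.
move=> co_mn /andP[x_gt0 lt_xn]; apply/eqP.
rewrite -(mod0n n) -(mul0n m) => /(mulnl_mod_inj co_mn lt_xn (ltn_trans x_gt0 lt_xn)) x0.
by rewrite x0 in x_gt0.
Qed.

(* Pigeonhole: an injection of [0, n) into itself is onto. *)
Lemma addn_mulnl_mod_surj m n r s : coprime m n -> 0 < n ->
  exists2 K, K < n & (r + K * m) %% n = s %% n.
Proof.
move=> co_mn n_gt0; set orb := [seq (r + j * m) %% n | j <- iota 0 n].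
have uniq_orb : uniq orb.
  rewrite map_inj_in_uniq ?iota_uniq // => j j'; rewrite !mem_iota /=.
  exact: addn_mulnl_mod_inj.
have sub_orb : {subset orb <= iota 0 n}.
  by move=> _ /mapP[j _ ->]; rewrite mem_iota ltn_mod.
have [_ /(_ (s %% n))] := uniq_min_size uniq_orb sub_orb (eq_leq (esym (size_map _ _))).
rewrite mem_iota ltn_mod n_gt0 => /mapP[K]; rewrite mem_iota => /andP[_ lt_Kn] ->.
by exists K.
Qed.

Lemma modn_inv p q : 1 < q -> coprime p q -> exists2 v, 0 < v < q & v * p %% q = 1.
Proof.
move=> q_gt1 co_pq; have [v lt_vq] := addn_mulnl_mod_surj 0 1 co_pq (ltnW q_gt1).
rewrite add0n (modn_small q_gt1) => vp1; exists v => //; rewrite lt_vq andbT lt0n.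
by apply: contra_eqN vp1 => /eqP->; rewrite mul0n mod0n.
Qed.

Lemma addn_mod_cases a b c n : a < n -> b < n -> c < n -> (a + b) %% n = c ->
  a + b = c \/ a + b = c + n.
Proof.
move=> lt_an lt_bn lt_cn <-; case: (ltnP (a + b) n) => [lt_abn | le_nab].
  by left; rewrite modn_small.
by right; rewrite -{2}(subnK le_nab) modnDr modn_small; lia.
Qed.

Lemma unimodular_coprime a b c d : a * b = c * d + 1 -> coprime a c /\ coprime b d.
Proof.
have coprime_l x y z t : x * y = z * t + 1 -> coprime x z.
  move=> E; rewrite /coprime -dvdn1.
  have : gcdn x z %| z * t + 1 by rewrite -E dvdn_mulr ?dvdn_gcdl.
  by rewrite dvdn_addr // dvdn_mulr ?dvdn_gcdr.
move=> E; split; first exact: coprime_l E.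
by apply: (coprime_l b a d c); rewrite mulnC E mulnC.
Qed.

Lemma unimodular_den_gt0 p q u v : p * v = q * u + 1 -> 0 < v.
Proof. by case: v => //; rewrite muln0 addn1. Qed.

Lemma mulmod_unimodular p q u v y : p * v = q * u + 1 -> v <= q -> y < v ->
  v * (y * p %% q) = q * (y * u %% v) + y.
Proof.
move=> E le_vq lt_yv; set a := y * u %% v; set b := y * u %/ v.
have v_gt0 : 0 < v by lia.
have yuE : y * u = b * v + a by rewrite /b /a -divn_eq.
have vypE : v * (y * p) = q * b * v + (q * a + y).
  by rewrite mulnCA (mulnC v) E mulnDr muln1 mulnCA yuE; lia.
have dvd_v : v %| q * a + y.
  by rewrite -(dvdn_addr _ (dvdn_mull (q * b) (dvdnn v))) -vypE dvdn_mulr.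
set X := (q * a + y) %/ v.
have XvE : X * v = q * a + y by rewrite divnK.
have ypE : y * p = b * q + X.
  by apply/eqP; rewrite -(eqn_pmul2l v_gt0) vypE -XvE; apply/eqP; lia.
have lt_Xq : X < q.
  rewrite -(ltn_pmul2r v_gt0) XvE; have : a < v by rewrite ltn_mod.
  by move=> lt_av; nia.
by rewrite ypE modnMDl modn_small // mulnC XvE.
Qed.

Lemma ltn_mulD_digits q a b x y : x < q -> y < q -> a != b ->
  (q * a + x < q * b + y) = (a < b).
Proof.
move=> lt_xq lt_yq; case: (ltngtP a b) => [lt_ab | lt_ba | //] _.
  have : q * a.+1 <= q * b by rewrite leq_mul2l lt_ab orbT.
  lia.
have : q * b.+1 <= q * a by rewrite leq_mul2l lt_ba orbT.
lia.
Qed.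

(** * Record minima of v |-> v p mod q *)

Definition min_record (p q v : nat) : bool :=
  all (fun x => v * p %% q < x * p %% q) (iota 1 v.-1).

Definition min_records (p q : nat) : seq nat := [seq v <- iota 1 q.-1 | min_record p q v].

Lemma min_recordP p q v :
  reflect (forall x, 0 < x < v -> v * p %% q < x * p %% q) (min_record p q v).
Proof.
apply: (iffP allP) => [rec_v x lt_xv | rec_v x].
  by apply: rec_v; rewrite mem_iota; lia.
by rewrite mem_iota => lt_xv; apply: rec_v; lia.
Qed.

Lemma mem_min_records p q v : (v \in min_records p q) = (0 < v < q) && min_record p q v.
Proof. by rewrite mem_filter mem_iota andbC; congr (_ && _); lia. Qed.

Lemma sorted_min_records p q : sorted ltn (min_records p q).
Proof. exact: (sorted_filter ltn_trans) (iota_ltn_sorted 1 q.-1). Qed.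

Lemma min_record_le1 p q v : min_record p q v -> 0 < v -> v * p %% q <= p %% q.
Proof.
move=> /min_recordP rec_v v_gt0; have [-> | lt_1v] : v = 1 \/ 1 < v by lia.
  by rewrite mul1n.
by have := rec_v 1 lt_1v; rewrite mul1n => /ltnW.
Qed.

Section Unimodular.

Variables p q u v : nat.
Hypotheses (unimod : p * v = q * u + 1) (lt_vq : v < q).

Let v_gt0 : 0 < v := unimodular_den_gt0 unimod.
Let co_pq : coprime p q := (unimodular_coprime unimod).1.
Let co_uv : coprime u v.
Proof. by rewrite coprime_sym; case: (unimodular_coprime unimod). Qed.

Lemma min_record_unimodular x : x < v -> min_record p q x = min_record u v x.
Proof.
move=> lt_xv; apply: eq_in_all => y; rewrite mem_iota => lt_yx.
rewrite -(ltn_pmul2l v_gt0) !(mulmod_unimodular unimod) ?(ltnW lt_vq) //; try lia.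
apply: ltn_mulD_digits; try lia; apply/eqP => /esym /(mulnl_mod_inj co_uv).
by move=> /(_ _ lt_xv); lia.
Qed.

Lemma min_records_unimodular : min_records p q = rcons (min_records u v) v.
Proof.
have vp1 : v * p %% q = 1 by rewrite mulnC unimod mulnC modnMDl modn_small //; lia.
have ne0 x : 0 < x < q -> x * p %% q != 0 by move=> ?; rewrite mulnl_mod_eq0.
have rec_v : min_record p q v.
  apply/min_recordP => x lt_xv; have lt_xq : x < q by lia.
  rewrite vp1 ltn_neqAle lt0n ne0 ?andbT; last by lia.
  by apply/eqP => /esym; rewrite -vp1 => /(mulnl_mod_inj co_pq lt_xq lt_vq); lia.
have no_rec_above x : v < x < q -> min_record p q x = false.
  move=> lt_vxq; apply/negbTE/negP => /min_recordP/(_ v) rec_x.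
  have : x * p %% q < 1 by rewrite -vp1 rec_x //; lia.
  by rewrite ltnS leqn0 (negbTE (ne0 x _)) //; lia.
rewrite /min_records (_ : q.-1 = v.-1 + (1 + (q.-1 - v))); last by lia.
rewrite iotaD filter_cat -cats1 (_ : 1 + v.-1 = v); last by lia.
congr (_ ++ _).
  by apply: eq_in_filter => x; rewrite mem_iota => lt_xv; apply: min_record_unimodular; lia.
rewrite iotaD /= rec_v addn1; congr (_ :: _).
rewrite -(filter_pred0 (iota v.+1 (q.-1 - v))).
by apply: eq_in_filter => x; rewrite mem_iota => lt_x; apply: no_rec_above; lia.
Qed.

End Unimodular.

(** * The sequence LFS *)

Lemma lt_nat_frac (R : numFieldType) a b c d : 0 < b -> 0 < d ->
  ((a%:R / b%:R : R) < c%:R / d%:R)%R = (a * d < c * b).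
Proof.
move=> b_gt0 d_gt0.
by rewrite ltr_pdivrMr ?ltr0n // mulrAC ltr_pdivlMr ?ltr0n // -!natrM ltr_nat.
Qed.

Lemma le_nat_frac (R : numFieldType) a b c d : 0 < b -> 0 < d ->
  ((a%:R / b%:R : R) <= c%:R / d%:R)%R = (a * d <= c * b).
Proof.
move=> b_gt0 d_gt0.
by rewrite ler_pdivrMr ?ltr0n // mulrAC ler_pdivlMr ?ltr0n // -!natrM ler_nat.
Qed.

Lemma denq_nat_frac p q : 0 < q -> coprime p q -> denq (p%:R / q%:R) = q.
Proof.
by case: q => // q _ co_pq; have := @coprimeq_den p q.+1; rewrite /= co_pq => ->.
Qed.

Lemma foldr_max_eq (R : realDomainType) (s : seq R) y : (0 <= y)%R -> y \in s ->
  {in s, forall z, z <= y}%R -> foldr Num.max 0%R s = y.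
Proof.
move=> y_ge0 s_y s_le_y; apply/le_anti/andP; split.
  elim: s s_le_y {s_y} => [|z s IHs] //= s_le_y.
  by rewrite ge_max s_le_y ?mem_head // IHs // => t s_t; rewrite s_le_y // inE s_t orbT.
elim: s s_y {s_le_y} => [|z s IHs] //=; rewrite inE le_max => /predU1P[<-|/IHs ->].
  by rewrite lexx.
by rewrite orbT.
Qed.

Lemma LFP_nat_frac p q u v : p * 2 < q -> p * v = q * u + 1 -> v < q ->
  LFP (p%:R / q%:R) = (u%:R / v%:R)%R.
Proof.
move=> lt_2pq unimod lt_vq; have v_gt0 := unimodular_den_gt0 unimod.
have q_gt0 : 0 < q by lia.
rewrite /LFP denq_nat_frac ?(unimodular_coprime unimod).1 //=.
apply: foldr_max_eq; first by rewrite divr_ge0 ?ler0n.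
  rewrite mem_filter lt_nat_frac // mulnC unimod addn1 ltnSn /farey_half mem_filter andTb.
  apply/andP; split.
    by rewrite divr_ge0 ?ler0n //= (_ : (1 / 2 = 1%:R / 2%:R :> rat)%R) // le_nat_frac //; nia.
  apply: (@allpairs_f_dep _ (fun _ => nat) _ (fun d i => (i%:R / d%:R : rat)%R));
    by rewrite mem_iota; nia.
move=> z; rewrite mem_filter => /andP[lt_z]; rewrite mem_filter => /andP[_].
case/allpairsPdep => d [i [d_range i_range z_id]]; subst z.
move: d_range i_range lt_z; rewrite !mem_iota => d_range i_range.
(* A fraction i/d < p/q with d <= q above u/v would satisfy
   q (i v - u d) + v (p d - i q) = d, forcing d >= q + v. *)
by rewrite lt_nat_frac ?le_nat_frac //; [nia | lia | lia].
Qed.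

Definition dens (s : seq rat) : seq nat := [seq `|denq r|%N | r <- s].

Lemma LFS_aux_dens q p f : coprime p q -> p * 2 < q -> q <= f ->
  dens (LFS_aux f (p%:R / q%:R)) = min_records p q.
Proof.
elim/ltn_ind: q p f => q IHq p [|f] co_pq lt_2pq le_qf; first by lia.
have [p0 | p_gt0] := posnP p.
  by move: co_pq; rewrite p0 /coprime gcd0n => /eqP q1; rewrite q1.
have q_gt1 : 1 < q by lia.
have [v /andP[v_gt0 lt_vq] vp1] := modn_inv q_gt1 co_pq.
set u := v * p %/ q.
have unimod : p * v = q * u + 1 by rewrite mulnC (divn_eq (v * p) q) vp1 mulnC.
have co_uv : coprime u v by rewrite coprime_sym (unimodular_coprime unimod).2.
rewrite /= mulf_eq0 invr_eq0 !pnatr_eq0 (gtn_eqF p_gt0) (gtn_eqF (ltnW q_gt1)).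
rewrite (LFP_nat_frac lt_2pq unimod lt_vq) /dens map_rcons denq_nat_frac //.
by rewrite (min_records_unimodular unimod lt_vq) -(IHq v lt_vq u f) //; nia.
Qed.

Lemma LFS_dens p q : coprime p q -> p * 2 < q -> dens (LFS (p%:R / q%:R)) = min_records p q.
Proof.
move=> co_pq lt_2pq; rewrite /LFS denq_nat_frac //; last by lia.
by apply: LFS_aux_dens => //=; nia.
Qed.

(** * Orbit segments *)

(* [Defs.orbK] is qualified because ssrbool also has a lemma [orbK]. *)
Lemma orbK_spec m n r s : coprime m n -> 0 < n ->
  Defs.orbK m n r s < n /\ (r + Defs.orbK m n r s * m) %% n = s %% n.
Proof.
move=> co_mn n_gt0; have [K lt_Kn hit_K] := addn_mulnl_mod_surj r s co_mn n_gt0.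
have has_hit : has (fun j => (r + j * m) %% n == s %% n) (iota 0 n).
  by apply/hasP; exists K; rewrite ?mem_iota ?hit_K.
have := has_hit; rewrite has_find size_iota => lt_orbK; split => //.
by have /eqP := nth_find 0 has_hit; rewrite nth_iota.
Qed.

Lemma orbK_eq m n r s K : coprime m n -> K < n -> (r + K * m) %% n = s %% n ->
  Defs.orbK m n r s = K.
Proof.
move=> co_mn lt_Kn hit_K; have n_gt0 : 0 < n by lia.
have [lt_orbK hit_orbK] := orbK_spec r s co_mn n_gt0.
by apply: (@addn_mulnl_mod_inj _ _ r _ _ co_mn lt_orbK lt_Kn); rewrite hit_orbK hit_K.
Qed.

Lemma size_orbit_seg m n r s : size (orbit_seg m n r s) = (Defs.orbK m n r s).+1.
Proof. by rewrite size_map size_iota. Qed.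

Lemma orbit_seg_uniq m n r s : coprime m n -> 0 < n -> uniq (orbit_seg m n r s).
Proof.
move=> co_mn n_gt0; have [lt_orbK _] := orbK_spec r s co_mn n_gt0.
rewrite map_inj_in_uniq ?iota_uniq // => j j'; rewrite !mem_iota /= => lt_j lt_j'.
by apply: addn_mulnl_mod_inj co_mn _ _; apply: leq_ltn_trans lt_orbK.
Qed.

Definition orbit_start (m n v : nat) : nat := m - v * m %% n.

Section Orbits.

Variables m n : nat.
Hypotheses (lt_mn : m < n) (co_mn : coprime m n).

Let n_gt0 : 0 < n. Proof. exact: leq_ltn_trans lt_mn. Qed.

Lemma mulnl_mod_gt0 x : 0 < x < n -> 0 < x * m %% n.
Proof. by move=> x_range; rewrite lt0n mulnl_mod_eq0. Qed.

Lemma orbK_to0 k v : k + v * m %% n = m -> 0 < v < n -> Defs.orbK m n k 0 = v.-1.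
Proof.
move=> km_E v_range; apply: orbK_eq => //; first by lia.
apply/eqP; rewrite -(eqn_modDr m) -addnA -mulSnr prednK; last by lia.
by rewrite -modnDmr km_E add0n.
Qed.

Lemma orbK_to0_spec k : k < m ->
  let v := (Defs.orbK m n k 0).+1 in v < n /\ k + v * m %% n = m.
Proof.
move=> lt_km v; have [lt_Kn hit0] := orbK_spec k 0 co_mn n_gt0.
have : (k + v * m %% n) %% n = m.
  by rewrite modnDmr /v mulSnr addnA -modnDml hit0 mod0n add0n modn_small.
have lt_wn : v * m %% n < n by rewrite ltn_mod.
have lt_kn : k < n by lia.
move=> /(addn_mod_cases lt_kn lt_wn lt_mn) [km_E | ]; last by lia.
split=> //; rewrite ltn_neqAle /v lt_Kn andbT; apply/eqP => v_n.
by move: km_E; rewrite /v v_n mulnC modnMl; lia.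
Qed.

Lemma orbit_between k v j : k + v * m %% n = m -> j < v < n ->
  (k < (k + j * m) %% n < m) = ((v - j) * m %% n < v * m %% n).
Proof.
move=> km_E j_range.
have w'_gt0 : 0 < (v - j) * m %% n by apply: mulnl_mod_gt0; lia.
have lt_w'n : (v - j) * m %% n < n by rewrite ltn_mod.
have lt_en : (k + j * m) %% n < n by rewrite ltn_mod.
have : ((k + j * m) %% n + (v - j) * m %% n) %% n = m.
  rewrite modnDm -addnA -mulnDl subnKC; last by lia.
  by rewrite -modnDmr km_E modn_small.
by case/(addn_mod_cases lt_en lt_w'n lt_mn); lia.
Qed.

Lemma admissible_min_record k v : k + v * m %% n = m -> 0 < v < n ->
  admissible m n k = min_record m n v.
Proof.
move=> km_E v_range; have lt_km : k < m by have := mulnl_mod_gt0 v_range; lia.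
rewrite /admissible lt_km /orbit_seg (orbK_to0 km_E v_range) prednK ?has_map; last by lia.
apply/hasPn/min_recordP => [no_between x x_range | rec_v j].
  have /no_between : v - x \in iota 0 v by rewrite mem_iota; lia.
  rewrite /= (orbit_between km_E) ?subKn -?leqNgt; try lia.
  rewrite leq_eqVlt; case/predU1P => // /(mulnl_mod_inj co_mn) => /(_ _ _); lia.
rewrite mem_iota /= => lt_jv; rewrite (orbit_between km_E); last by lia.
have [->|j_gt0] := posnP j; first by rewrite subn0 ltnn.
by rewrite -leqNgt ltnW // rec_v; lia.
Qed.

Lemma min_records_start v : v \in min_records m n ->
  0 < v < n /\ orbit_start m n v + v * m %% n = m.
Proof.
rewrite mem_min_records => /andP[v_range rec_v]; split=> //.
have := min_record_le1 rec_v (proj1 (andP v_range)); rewrite (modn_small lt_mn).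
by rewrite /orbit_start; lia.
Qed.

Lemma adm_list_min_records : adm_list m n = map (orbit_start m n) (min_records m n).
Proof.
apply: (irr_sorted_eq ltn_trans ltnn).
- exact: (sorted_filter ltn_trans) (iota_ltn_sorted 0 m).
- rewrite sorted_map; apply: (@sub_in_sorted _ (mem (min_records m n)) ltn); last first.
  + exact: sorted_min_records.
  + exact/allP.
  move=> x y R_x R_y lt_xy /=.
  have [/andP[x_gt0 _] kx_E] := min_records_start R_x.
  have [_ ky_E] := min_records_start R_y.
  move: R_y; rewrite mem_min_records => /andP[_ /min_recordP/(_ x)].
  by rewrite x_gt0 => /(_ lt_xy); lia.
move=> k; rewrite mem_filter mem_iota /=; apply/andP/mapP => [[adm_k lt_km] | [v R_v ->]].
  have [lt_vn km_E] := orbK_to0_spec lt_km.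
  exists (Defs.orbK m n k 0).+1; last by rewrite /orbit_start; lia.
  by rewrite mem_min_records -(admissible_min_record km_E) ?adm_k; lia.
have [v_range km_E] := min_records_start R_v; move: R_v; rewrite mem_min_records.
by rewrite (admissible_min_record km_E v_range) => /andP[_ ->]; have := mulnl_mod_gt0 v_range; lia.
Qed.

Lemma size_orbit_seg_to0 k v : k + v * m %% n = m -> 0 < v < n ->
  size (undup (orbit_seg m n k 0)) = v.
Proof.
move=> km_E v_range; rewrite undup_id ?orbit_seg_uniq //.
by rewrite size_orbit_seg (orbK_to0 km_E v_range) prednK //; lia.
Qed.

Lemma index_orbit_seg_from_m k v : k + v * m %% n = m -> 0 < v < n ->
  index k (orbit_seg m n m 0) = n - v.
Proof.
move=> km_E v_range; have lt_kn : k < n by lia.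
have orbK_m : Defs.orbK m n m 0 = n.-1.
  apply: orbK_eq => //; first by lia.
  by rewrite -mulSn prednK // mulnC modnMl mod0n.
have nth_k : nth 0 (orbit_seg m n m 0) (n - v) = k.
  rewrite (nth_map 0) ?nth_iota ?size_iota ?orbK_m ?add0n; try lia.
  rewrite -(modn_small lt_kn); apply/eqP; rewrite -(eqn_modDr (v * m)).
  rewrite -addnA -mulnDl subnK; last by lia.
  by rewrite -modnDmr mulnC modnMl addn0 -modnDmr km_E.
by rewrite -nth_k index_uniq ?orbit_seg_uniq // size_orbit_seg orbK_m; lia.
Qed.

End Orbits.

Theorem lemma2p21 (m n : nat) :
  0 < m -> m.*2 < n -> coprime m n ->
  let s := LFS (m%:R / n%:R : rat)%R in
  let A := adm_list m n in
  size A = size s /\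
  (forall i, i < size s ->
     Posz (size (undup (orbit_seg m n (nth 0 A i) 0))) = denq (nth 0%R s i)) /\
  (forall i j, i < j -> j < size s ->
     index (nth 0 A j) (orbit_seg m n m 0) < index (nth 0 A i) (orbit_seg m n m 0)).
Proof.
move=> _ lt_2mn co_mn s A; have lt_mn : m < n by lia.
set R := min_records m n.
have dens_s : dens s = R by apply: LFS_dens; rewrite ?muln2.
have A_R : A = map (orbit_start m n) R by apply: adm_list_min_records.
have size_s : size s = size R by rewrite -dens_s size_map.
have nth_A i : i < size s -> nth 0 A i = orbit_start m n (nth 0 R i).
  by rewrite A_R size_s => lt_i; rewrite (nth_map 0).
have R_i i : i < size s -> nth 0 R i \in R by rewrite size_s; apply: mem_nth.
split; first by rewrite A_R size_map size_s.
split=> [i lt_i | i j lt_ij lt_j].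
  have [v_range km_E] := min_records_start lt_mn co_mn (R_i i lt_i).
  rewrite nth_A // (size_orbit_seg_to0 lt_mn co_mn km_E v_range).
  rewrite -dens_s (nth_map 0%R) -?dens_s ?size_map //.
  by rewrite abszE gtr0_norm // denq_gt0.
have lt_i : i < size s by apply: ltn_trans lt_j.
have [vi_range kmi_E] := min_records_start lt_mn co_mn (R_i i lt_i).
have [vj_range kmj_E] := min_records_start lt_mn co_mn (R_i j lt_j).
rewrite !nth_A // (index_orbit_seg_from_m lt_mn co_mn kmi_E vi_range).
rewrite (index_orbit_seg_from_m lt_mn co_mn kmj_E vj_range).
have : nth 0 R i < nth 0 R j.
  by apply: (@sorted_ltn_nth _ ltn ltn_trans 0 _ (sorted_min_records m n)); rewrite ?inE -?size_s.
lia.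
Qed.
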